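(* Let $\alpha,\beta,\lambda\in\mathbb{R}$ with $\beta\neq 0$, let $J_1^{**}=\mathrm{diag}(\alpha+\beta i,\ \alpha-\beta i,\ \lambda)$ and $h>0$. Define $$T_1=2\beta\big(e^{\alpha h}\cos(\beta h)-e^{\lambda h}\big)+2e^{\alpha h}(\lambda-\alpha)\sin(\beta h),$$ $$\begin{aligned}T_2={}&\alpha\big(1-e^{\alpha h}\cos(\beta h)\big)\big(-2e^{\alpha h}\sin(\beta h)\big)+\alpha e^{\alpha h}\sin(\beta h)\big(2e^{\lambda h}-2e^{\alpha h}\cos(\beta h)\big)\\&+\beta\big(1-e^{\alpha h}\cos(\beta h)\big)\big(2e^{\alpha h}\cos(\beta h)-2e^{\lambda h}\big)+\beta e^{\alpha h}\sin(\beta h)\big(-2e^{\alpha h}\sin(\beta h)\big)\\&+\lambda\big(1-e^{\lambda h}\big)\big(2e^{\alpha h}\sin(\beta h)\big),\end{aligned}$$ $$T_3=-2\beta+2\alpha e^{\alpha h}\sin(\beta h)+2\beta e^{\alpha h}\cos(\beta h),$$ and $$\theta=\frac{T_1}{T_2},\qquad \phi=\frac{2e^{\alpha h}\sin(\beta h)}{2\beta+T_3\theta},\qquad \psi=e^{\lambda h}-\phi\lambda\big(\theta e^{\lambda h}+1-\theta\big).$$ Then (whenever these expressions are defined and the scheme is uniquely solvable for $\mathbf{x}_{k+1}$) the difference scheme $$\frac{\mathbf{x}_{k+1}-\psi\mathbf{x}_k}{\phi}=J_1^{**}\big[\theta\mathbf{x}_{k+1}+(1-\theta)\mathbf{x}_k\big]$$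 is exact for the system $\mathbf{x}'=J_1^{**}\mathbf{x}$.
   Context: A one-step difference scheme with step size $h>0$ for $\mathbf{x}'=M\mathbf{x}$ is called exact if for every initial vector $\mathbf{x}_0$ the sequence $(\mathbf{x}_k)$ it generates satisfies $\mathbf{x}_k=\mathbf{x}(kh)$ for all $k\ge 0$, where $\mathbf{x}(t)$ solves $\mathbf{x}'=M\mathbf{x}$, $\mathbf{x}(0)=\mathbf{x}_0$. *)

From Stdlib Require Import Reals.
From Coquelicot Require Import Coquelicot.
Open Scope R_scope.

Inductive idx3 : Set := i1 | i2 | i3.

Definition vec3 := idx3 -> C.

Definition mat3 := idx3 -> idx3 -> C.

Definition mxv (M : mat3) (x : vec3) : vec3 :=
  fun i => Cplus (Cplus (Cmult (M i i1) (x i1)) (Cmult (M i i2) (x i2)))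
                 (Cmult (M i i3) (x i3)).

Definition diag3 (d1 d2 d3 : C) : mat3 :=
  fun i j => match i, j with
             | i1, i1 => d1 | i2, i2 => d2 | i3, i3 => d3 | _, _ => RtoC 0
             end.

(* x : R -> C^3 solves x' = M x (derivative w.r.t. the real variable t,
   componentwise in C viewed as a real normed space) with x(0) = x0. *)
Definition solves_ivp (M : mat3) (x0 : vec3) (x : R -> vec3) : Prop :=
  x 0 = x0 /\
  forall (t : R) (i : idx3),
    is_derive (K := R_AbsRing) (V := C_R_NormedModule)
      (fun s => x s i) t (mxv M (x t) i).

Definition uniquely_solvable (step : vec3 -> vec3 -> Prop) : Prop :=
  forall u : vec3, exists! v : vec3, step u v.

Definition exact_scheme (M : mat3) (h : R) (step : vec3 -> vec3 -> Prop) : Prop :=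
  forall (x0 : vec3) (xs : nat -> vec3),
    xs O = x0 -> (forall k, step (xs k) (xs (S k))) ->
    forall x : R -> vec3, solves_ivp M x0 x ->
    forall k : nat, xs k = x (INR k * h).

Definition nsfd_step (M : mat3) (psi phi theta : R) (u v : vec3) : Prop :=
  forall i : idx3,
    Cdiv (Cminus (v i) (Cmult (RtoC psi) (u i))) (RtoC phi)
    = mxv M (fun j => Cplus (Cmult (RtoC theta) (v j))
                            (Cmult (RtoC (1 - theta)) (u j))) i.

From Stdlib Require Import Reals Lra.
From Coquelicot Require Import Coquelicot.
Open Scope R_scope.

(* The matrix is diagonal, so both the flow and the scheme act coordinatewise:
   over one step the flow multiplies the coordinate of eigenvalue d by e^{hd},
   and the (uniquely solvable) scheme multiplies it by any E with
   E - psi = phi d (theta E + 1 - theta).  Exactness therefore reduces to this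
   scalar relation for E = e^{hd} and the three eigenvalues.  For lambda it is
   the definition of psi, and for alpha - beta i it is the conjugate of the
   relation for alpha + beta i.  For alpha + beta i the imaginary part is the
   definition of phi, while the real part, once the denominator
   2 beta + T3 theta is cleared, is linear in theta with root T1 / T2. *)

Definition cexp (d : C) (t : R) : C :=
  (exp (Re d * t) * cos (Im d * t), exp (Re d * t) * sin (Im d * t)).

Lemma cexp_0 (d : C) : cexp d 0 = 1%C.
Proof.
  unfold cexp. rewrite !Rmult_0_r, exp_0, cos_0, sin_0.
  apply injective_projections; simpl; ring.
Qed.

Lemma cexp_add (d : C) (t s : R) : cexp d (t + s) = (cexp d s * cexp d t)%C.
Proof.
  unfold cexp, Cmult; simpl.
  rewrite !Rmult_plus_distr_l, exp_plus, cos_plus, sin_plus.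
  apply injective_projections; simpl; ring.
Qed.

Lemma is_derive_Re (f : R -> C) (t : R) (l : C) :
  is_derive (K := R_AbsRing) (V := C_R_NormedModule) f t l ->
  is_derive (fun s => Re (f s)) t (Re l).
Proof.
  intros Hf.
  eapply filterdiff_ext_lin.
  - apply (filterdiff_comp f (fun z : C_R_NormedModule => fst z)); [exact Hf|].
    apply filterdiff_linear, (is_linear_fst (U := R_NormedModule) (V := R_NormedModule)).
  - reflexivity.
Qed.

Lemma is_derive_Im (f : R -> C) (t : R) (l : C) :
  is_derive (K := R_AbsRing) (V := C_R_NormedModule) f t l ->
  is_derive (fun s => Im (f s)) t (Im l).
Proof.
  intros Hf.
  eapply filterdiff_ext_lin.
  - apply (filterdiff_comp f (fun z : C_R_NormedModule => snd z)); [exact Hf|].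
    apply filterdiff_linear, (is_linear_snd (U := R_NormedModule) (V := R_NormedModule)).
  - reflexivity.
Qed.

Lemma is_derive_0_const (g : R -> R) :
  (forall t, is_derive g t 0) -> forall t, g t = g 0.
Proof.
  intros Hg t.
  destruct (Rtotal_order t 0) as [Hlt | [-> | Hgt]].
  - apply (eq_is_derive g t 0); [intros; apply Hg | exact Hlt].
  - reflexivity.
  - symmetry. apply (eq_is_derive g 0 t); [intros; apply Hg | exact Hgt].
Qed.

Lemma is_derive_cexp_opp (d : C) (t : R) :
  is_derive (fun s => Re (cexp d (- s))) t (Re (- d * cexp d (- t)))%C /\
  is_derive (fun s => Im (cexp d (- s))) t (Im (- d * cexp d (- t)))%C.
Proof.
  unfold cexp, Re, Im; simpl. split; auto_derive; auto; ring.
Qed.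

Lemma linear_ode_solution (d : C) (f : R -> C) :
  (forall t, is_derive (K := R_AbsRing) (V := C_R_NormedModule) f t (d * f t)%C) ->
  forall t, f t = (cexp d t * f 0)%C.
Proof.
  intros Hf.
  assert (Hderiv : forall t,
    is_derive (fun s => Re (cexp d (- s) * f s)%C) t 0 /\
    is_derive (fun s => Im (cexp d (- s) * f s)%C) t 0).
  { intros t.
    destruct (is_derive_cexp_opp d t) as [Hre Him].
    pose proof (is_derive_Re f t _ (Hf t)) as Hfre.
    pose proof (is_derive_Im f t _ (Hf t)) as Hfim.
    split.
    - eapply is_derive_ext; [intros s; symmetry; apply re_mult|].
      evar (z : R); replace 0 with z.
      + apply (is_derive_minus (fun s => Re (cexp d (- s)) * Re (f s))
                               (fun s => Im (cexp d (- s)) * Im (f s)));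
          apply Derive.is_derive_mult; eassumption.
      + unfold z, minus, plus, opp, Re, Im; simpl; ring.
    - eapply is_derive_ext; [intros s; symmetry; apply im_mult|].
      evar (z : R); replace 0 with z.
      + apply (is_derive_plus (fun s => Re (cexp d (- s)) * Im (f s))
                              (fun s => Im (cexp d (- s)) * Re (f s)));
          apply Derive.is_derive_mult; eassumption.
      + unfold z, plus, Re, Im; simpl; ring. }
  intros t.
  assert (Hconst : (cexp d (- t) * f t)%C = (cexp d (- 0) * f 0)%C).
  { apply injective_projections;
      [ apply (is_derive_0_const (fun s => Re (cexp d (- s) * f s)%C))
      | apply (is_derive_0_const (fun s => Im (cexp d (- s) * f s)%C)) ];
      intros s; apply Hderiv. }
  rewrite Ropp_0, cexp_0, Cmult_1_l in Hconst.
  rewrite <- Hconst, Cmult_assoc, <- cexp_add, Rplus_opp_l, cexp_0.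
  ring.
Qed.

Lemma mxv_diag3 (d1 d2 d3 : C) (v : vec3) (i : idx3) :
  mxv (diag3 d1 d2 d3) v i = (diag3 d1 d2 d3 i i * v i)%C.
Proof. destruct i; unfold mxv, diag3; ring. Qed.

Lemma solves_ivp_diag3_shift (d1 d2 d3 : C) (x0 : vec3) (x : R -> vec3) :
  solves_ivp (diag3 d1 d2 d3) x0 x ->
  forall t h i, x (t + h) i = (cexp (diag3 d1 d2 d3 i i) h * x t i)%C.
Proof.
  intros [_ Hx] t h i.
  assert (Hi : forall s, x s i = (cexp (diag3 d1 d2 d3 i i) s * x 0 i)%C).
  { apply linear_ode_solution. intros s. rewrite <- mxv_diag3. apply Hx. }
  rewrite (Hi (t + h)), (Hi t), cexp_add. ring.
Qed.

Lemma exact_scheme_of_flow (M : mat3) (h : R) (step : vec3 -> vec3 -> Prop) :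
  uniquely_solvable step ->
  (forall x0 x, solves_ivp M x0 x -> forall t, step (x t) (x (t + h))) ->
  exact_scheme M h step.
Proof.
  intros Huniq Hflow x0 xs Hxs0 Hxs x Hx.
  induction k as [|k IH].
  - destruct Hx as [Hx0 _]. rewrite Rmult_0_l, Hxs0, Hx0. reflexivity.
  - destruct (Huniq (xs k)) as [v [_ Hv]].
    rewrite <- (Hv _ (Hxs k)), (Hv (x (INR k * h + h))).
    + rewrite S_INR. f_equal. ring.
    + rewrite IH. exact (Hflow x0 x Hx _).
Qed.

Definition nsfd_exact_mode (psi phi theta h : R) (d : C) : Prop :=
  (cexp d h - psi = phi * d * (theta * cexp d h + (1 - theta)%R))%C.

Lemma nsfd_step_diag3 (d1 d2 d3 : C) (psi phi theta h : R) (u v : vec3) :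
  phi <> 0 ->
  (forall i, nsfd_exact_mode psi phi theta h (diag3 d1 d2 d3 i i)) ->
  (forall i, v i = (cexp (diag3 d1 d2 d3 i i) h * u i)%C) ->
  nsfd_step (diag3 d1 d2 d3) psi phi theta u v.
Proof.
  intros Hphi Hmode Hv i.
  assert (Hphi' : RtoC phi <> RtoC 0) by (intros E; apply Hphi; injection E; auto).
  rewrite mxv_diag3, Hv.
  transitivity ((cexp (diag3 d1 d2 d3 i i) h - psi) * u i / phi)%C.
  - field. exact Hphi'.
  - rewrite Hmode. field. exact Hphi'.
Qed.

Lemma diag3_nsfd_exact (d1 d2 d3 : C) (psi phi theta h : R) :
  phi <> 0 ->
  (forall i, nsfd_exact_mode psi phi theta h (diag3 d1 d2 d3 i i)) ->
  uniquely_solvable (nsfd_step (diag3 d1 d2 d3) psi phi theta) ->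
  exact_scheme (diag3 d1 d2 d3) h (nsfd_step (diag3 d1 d2 d3) psi phi theta).
Proof.
  intros Hphi Hmode Huniq.
  apply exact_scheme_of_flow; [exact Huniq|].
  intros x0 x Hx t.
  apply (nsfd_step_diag3 d1 d2 d3 psi phi theta h); [exact Hphi | exact Hmode |].
  intros i. exact (solves_ivp_diag3_shift _ _ _ _ _ Hx t h i).
Qed.

Lemma cexp_conj (d : C) (t : R) : cexp (Cconj d) t = Cconj (cexp d t).
Proof.
  unfold cexp, Cconj, Re, Im; simpl.
  rewrite Ropp_mult_distr_l_reverse, cos_neg, sin_neg, Ropp_mult_distr_r. reflexivity.
Qed.

Lemma nsfd_exact_mode_conj (psi phi theta h : R) (d : C) :
  nsfd_exact_mode psi phi theta h d -> nsfd_exact_mode psi phi theta h (Cconj d).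
Proof.
  unfold nsfd_exact_mode. intros Hd.
  assert (Hconj_real : forall r : R, Cconj r = r).
  { intros r. unfold Cconj, RtoC; simpl. now rewrite Ropp_0. }
  rewrite cexp_conj, <- (Hconj_real psi), <- (Hconj_real phi), <- (Hconj_real theta),
    <- (Hconj_real (1 - theta)).
  rewrite <- Cminus_conj, Hd, !Cmult_conj, Cplus_conj, Cmult_conj. reflexivity.
Qed.

Lemma nsfd_exact_mode_real (l psi phi theta h : R) :
  psi = exp (l * h) - phi * l * (theta * exp (l * h) + 1 - theta) ->
  nsfd_exact_mode psi phi theta h (RtoC l).
Proof.
  intros ->. unfold nsfd_exact_mode, cexp, Re, Im; simpl.
  rewrite Rmult_0_l, cos_0, sin_0.
  apply injective_projections; simpl; ring.
Qed.

Lemma nsfd_exact_mode_complex (alpha beta lambda h : R) :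
  let ea := exp (alpha * h) in
  let el := exp (lambda * h) in
  let c := cos (beta * h) in
  let s := sin (beta * h) in
  let T1 := 2 * beta * (ea * c - el) + 2 * ea * (lambda - alpha) * s in
  let T2 := alpha * (1 - ea * c) * (- 2 * ea * s)
            + alpha * ea * s * (2 * el - 2 * ea * c)
            + beta * (1 - ea * c) * (2 * ea * c - 2 * el)
            + beta * ea * s * (- 2 * ea * s)
            + lambda * (1 - el) * (2 * ea * s) in
  let T3 := - 2 * beta + 2 * alpha * ea * s + 2 * beta * ea * c in
  let theta := T1 / T2 in
  let phi := 2 * ea * s / (2 * beta + T3 * theta) in
  let psi := el - phi * lambda * (theta * el + 1 - theta) in
  T2 <> 0 -> 2 * beta + T3 * theta <> 0 ->
  nsfd_exact_mode psi phi theta h (alpha, beta).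
Proof.
  intros ea el c s T1 T2 T3 theta phi psi HT2 HD.
  set (D := 2 * beta + T3 * theta) in *.
  assert (Htheta : theta * T2 = T1) by (unfold theta; field; exact HT2).
  assert (Hphi : phi * D = 2 * ea * s) by (unfold phi; field; exact HD).
  assert (Hreal : (ea * c - el) * D + 2 * ea * s * (lambda * (theta * el + 1 - theta))
                  = 2 * ea * s * (alpha * (theta * ea * c + 1 - theta) - beta * theta * ea * s)).
  { unfold D, T3. unfold T1, T2 in Htheta. clearbody theta. lra. }
  assert (Him : ea * s = phi * (beta * (theta * ea * c + 1 - theta) + alpha * theta * ea * s)).
  { unfold D, T3 in Hphi. lra. }
  assert (Hre : ea * c - psi = phi * (alpha * (theta * ea * c + 1 - theta) - beta * theta * ea * s)).
  { apply (Rmult_eq_reg_r D); [|exact HD].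
    transitivity ((ea * c - el) * D + phi * D * (lambda * (theta * el + 1 - theta))).
    { unfold psi. ring. }
    rewrite Hphi, Hreal, <- Hphi. ring. }
  unfold nsfd_exact_mode, cexp, Re, Im; simpl.
  fold ea c s.
  apply injective_projections; simpl; lra.
Qed.

Theorem corollary1 (alpha beta lambda h : R) :
  beta <> 0 -> h > 0 ->
  let J := diag3 (alpha, beta) (alpha, - beta) (RtoC lambda) in
  let ea := exp (alpha * h) in
  let el := exp (lambda * h) in
  let c := cos (beta * h) in
  let s := sin (beta * h) in
  let T1 := 2 * beta * (ea * c - el) + 2 * ea * (lambda - alpha) * s in
  let T2 := alpha * (1 - ea * c) * (- 2 * ea * s)
            + alpha * ea * s * (2 * el - 2 * ea * c)
            + beta * (1 - ea * c) * (2 * ea * c - 2 * el)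
            + beta * ea * s * (- 2 * ea * s)
            + lambda * (1 - el) * (2 * ea * s) in
  let T3 := - 2 * beta + 2 * alpha * ea * s + 2 * beta * ea * c in
  let theta := T1 / T2 in
  let phi := 2 * ea * s / (2 * beta + T3 * theta) in
  let psi := el - phi * lambda * (theta * el + 1 - theta) in
  T2 <> 0 -> 2 * beta + T3 * theta <> 0 -> phi <> 0 ->
  uniquely_solvable (nsfd_step J psi phi theta) ->
  exact_scheme J h (nsfd_step J psi phi theta).
Proof.
  intros _ _ J ea el c s T1 T2 T3 theta phi psi HT2 HD Hphi Huniq.
  pose proof (nsfd_exact_mode_complex alpha beta lambda h HT2 HD) as Hpair.
  apply diag3_nsfd_exact; [exact Hphi | | exact Huniq].
  intros [| |].
  - exact Hpair.
  - exact (nsfd_exact_mode_conj _ _ _ _ _ Hpair).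
  - apply nsfd_exact_mode_real. reflexivity.
Qed.
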